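(* Let $t:\Sigma^*\to\Omega^*$ be a rational partial function with suffix-closed domain $X=\mathrm{dom}(t)$. There is a constant $c$ (depending only on $t$) such that for all $u,v,w\in\Sigma^*$ with $uw,vw\in X$ and $u\mathrel{\mathcal R_t}v$ we have $\|t(uw),t(vw)\|\le c\,(|u|+|v|)$, i.e. $\|t(uw),t(vw)\|\in O(|u|+|v|)$.
   Context: For words $x,y$, $x\wedge y$ is their longest common suffix and $\|x,y\|=|x|+|y|-2|x\wedge y|$. $u\mathrel{\mathcal R_t}v$ iff $\{z:uz\in X\}=\{z:vz\in X\}$ and the set $\{\|t(uw),t(vw)\|:uw,vw\in X\}$ is finite. *)

From mathcomp Require Import all_boot.
Set Implicit Arguments. Unset Strict Implicit. Unset Printing Implicit Defensive.

Record transducer (Sig Om : finType) := Transducer {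
  tstate : finType;
  tinit : pred tstate;
  tfinal : pred tstate;
  ttrans : seq (tstate * seq Sig * seq Om * tstate) }.

Inductive trun (Sig Om : finType) (T : transducer Sig Om) :
  tstate T -> seq Sig -> seq Om -> tstate T -> Prop :=
| trun_nil p : @trun Sig Om T p [::] [::] p
| trun_cons p x y q xs ys r :
    (p, x, y, q) \in @ttrans Sig Om T -> @trun Sig Om T q xs ys r -> @trun Sig Om T p (x ++ xs) (y ++ ys) r.

Definition taccepts (Sig Om : finType) (T : transducer Sig Om) (x : seq Sig) (y : seq Om) :=
  exists (p q : tstate T), @tinit Sig Om T p /\ @tfinal Sig Om T q /\ @trun Sig Om T p x y q.

Definition rational_function (Sig Om : finType) (t : seq Sig -> option (seq Om)) :=
  exists T : transducer Sig Om, forall x y, t x = Some y <-> taccepts T x y.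

Definition in_dom (Sig Om : Type) (t : seq Sig -> option (seq Om)) (x : seq Sig) :=
  t x <> None.

Definition suffix_closed_dom (Sig Om : Type) (t : seq Sig -> option (seq Om)) :=
  forall u w : seq Sig, in_dom t (u ++ w) -> in_dom t w.

Fixpoint lcp (A : eqType) (s1 s2 : seq A) : nat :=
  match s1, s2 with
  | a :: s1', b :: s2' => if a == b then (lcp s1' s2').+1 else 0
  | _, _ => 0
  end.

Definition lcs (A : eqType) (x y : seq A) : nat := lcp (rev x) (rev y).

Definition wdist (A : eqType) (x y : seq A) : nat := size x + size y - 2 * lcs x y.

Definition Rt (Sig Om : finType) (t : seq Sig -> option (seq Om)) (u v : seq Sig) :=
  (forall z, in_dom t (u ++ z) <-> in_dom t (v ++ z)) /\
  exists s : seq nat, forall w y1 y2,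
    t (u ++ w) = Some y1 -> t (v ++ w) = Some y2 -> wdist y1 y2 \in s.

From mathcomp Require Import all_boot zify.
Set Implicit Arguments. Unset Strict Implicit. Unset Printing Implicit Defensive.

(* Fix a transducer T recognising t and read its runs letter by letter through
   configurations (state, unread rest of the input of the current transition);
   only finitely many, say N, occur.  Two accepting runs on u w and v w read w in
   lockstep, so if |w| >= N^2 a pair of configurations repeats and w = w1 w2 w3
   with both runs pumpable along w2.  As u R_t v, the distance between the
   pumped outputs is bounded in the number of iterations; this forces the two
   loop outputs to have equal length and to be conjugate by the word realigning
   the two sides, so that removing the loop leaves the distance unchanged.  Hence
   one may assume |w| < N^2.  Finally, removing cycles from a run with a fixed
   input gives |t x| <= K N (|x| + 1), K the longest output of a transition. *)

Section Walks.
Variables (V : eqType) (A : Type) (step : V -> A -> V -> Prop).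

Inductive walk : V -> seq A -> V -> Prop :=
| walk_nil v : walk v [::] v
| walk_cons v a u w v' : step v a u -> walk u w v' -> walk v (a :: w) v'.

Lemma walk_cat v w1 u w2 v' : walk v w1 u -> walk u w2 v' -> walk v (w1 ++ w2) v'.
Proof. by elim=> {v w1 u} // v a u w1 u' Hs _ IH /IH; apply: walk_cons. Qed.

Lemma walk_map (f : V -> V) v w v' :
  (forall v a u, step v a u -> step (f v) a (f u)) -> walk v w v' -> walk (f v) w (f v').
Proof.
by move=> Hf; elim=> {v w v'} [v | v a u w v' /Hf Hs _]; [apply: walk_nil | apply: walk_cons].
Qed.

Lemma walk_all (P : pred A) v w v' :
  (forall v a u, step v a u -> P a) -> walk v w v' -> all P w.
Proof. by move=> HP; elim=> {v w v'} //= v a u w v' /HP -> _. Qed.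

Lemma walk_inv (P : pred V) v w v' :
  (forall v a u, step v a u -> P v -> P u) -> walk v w v' -> P v -> P v'.
Proof. by move=> HP; elim=> {v w v'} // v a u w v' /HP Hu _ IH /Hu. Qed.

Variable S : seq V.
Hypothesis step_closed : forall v a u, step v a u -> v \in S -> u \in S.

Lemma walk_loop_or_uniq v w v' : walk v w v' -> v \in S ->
  (exists w1 w2 w3 u,
     [/\ w = w1 ++ w2 ++ w3, 0 < size w2, walk v w1 u, walk u w2 u & walk u w3 v']) \/
  exists2 L : seq V, [/\ uniq L, size L = (size w).+1 & {subset L <= S}] &
    forall u, u \in L -> exists w1 w2, [/\ w = w1 ++ w2, walk v w1 u & walk u w2 v'].
Proof.
elim=> {v w v'} [v Sv | v a u w v' Hs Hw IH Sv].
  right; exists [:: v]; first by split=> // u; rewrite inE => /eqP->.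
  by move=> u; rewrite inE => /eqP->; exists [::], [::]; split=> //; apply: walk_nil.
case: (IH (step_closed Hs Sv)) => [[w1 [w2 [w3 [x [-> Hw2 H1 H2 H3]]]]] | [L [UL SL LS] HL]].
  by left; exists (a :: w1), w2, w3, x; split=> //; apply: walk_cons Hs H1.
case: (boolP (v \in L)) => [/HL [w1 [w2 [Ew H1 H2]]] | vL].
  left; exists [::], (a :: w1), w2, v; split=> //; first by rewrite Ew.
  - exact: walk_nil.
  - exact: walk_cons Hs H1.
right; exists (v :: L).
  by split=> /=; [rewrite vL | rewrite SL | move=> x; rewrite inE => /predU1P[->|/LS]].
move=> x; rewrite inE => /predU1P[-> | /HL [w1 [w2 [Ew H1 H2]]]].
  by exists [::], (a :: w); split; [|apply: walk_nil | apply: walk_cons Hs Hw].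
by exists (a :: w1), w2; split; [rewrite Ew | apply: walk_cons Hs H1 |].
Qed.

Lemma walk_loop v w v' : walk v w v' -> v \in S -> size S <= size w ->
  exists w1 w2 w3 u,
    [/\ w = w1 ++ w2 ++ w3, 0 < size w2, walk v w1 u, walk u w2 u & walk u w3 v'].
Proof.
move=> Hw Sv leSw; case: (walk_loop_or_uniq Hw Sv) => // -[L [UL SL LS] _].
by have := uniq_leq_size UL LS; rewrite SL ltnNge leSw.
Qed.

Lemma walk_short v w v' : walk v w v' -> v \in S ->
  exists2 w', walk v w' v' & size w' < size S.
Proof.
move En: (size w) => n; elim/ltn_ind: n w En => n IH w Ew Hw Sv.
case: (ltnP (size w) (size S)) => [|leSw]; first by exists w.
have [w1 [w2 [w3 [u [Ew' Hw2 H1 _ H3]]]]] := walk_loop Hw Sv leSw.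
apply: (IH (size (w1 ++ w3))) (walk_cat H1 H3) Sv => //.
by rewrite -Ew Ew' !size_cat ltn_add2l -{1}[size w3]add0n ltn_add2r.
Qed.

End Walks.

Definition seqpow (A : Type) (s : seq A) (k : nat) : seq A := flatten (nseq k s).

Lemma seqpowS (A : Type) (s : seq A) k : seqpow s k.+1 = s ++ seqpow s k.
Proof. by []. Qed.

Lemma size_seqpow (A : Type) (s : seq A) k : size (seqpow s k) = k * size s.
Proof. by elim: k => // k IH; rewrite seqpowS size_cat IH mulSn. Qed.

Lemma seqpowSr (A : Type) (s : seq A) k : seqpow s k.+1 = seqpow s k ++ s.
Proof.
by elim: k => [|k IH]; [rewrite /seqpow /= cats0 | rewrite {1}seqpowS {1}IH catA].
Qed.

Lemma seqpow1 (A : Type) (s : seq A) : seqpow s 1 = s.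
Proof. exact: cats0. Qed.

Lemma rev_seqpow (A : Type) (s : seq A) k : rev (seqpow s k) = seqpow (rev s) k.
Proof. by elim: k => // k IH; rewrite seqpowS rev_cat IH -seqpowSr. Qed.

Section PrefixDistance.
Variable A : eqType.
Implicit Types x y z e g h : seq A.

Lemma lcp_sym x y : lcp x y = lcp y x.
Proof. by elim: x y => [|a x IH] [|b y] //=; rewrite eq_sym IH. Qed.

Lemma lcp_catl z x y : lcp (z ++ x) (z ++ y) = size z + lcp x y.
Proof. by elim: z => //= a z ->; rewrite eqxx. Qed.

Lemma lcp_leq_size x y : lcp x y <= size x.
Proof. by elim: x y => [|a x IH] [|b y] //=; case: ifP => // _; apply: IH. Qed.

Lemma lcp_take n x y : n <= lcp x y -> take n x = take n y.
Proof.
elim: x y n => [|a x IH] [|b y] [|n] //=; case: ifP => // /eqP -> le_n.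
by rewrite (IH y n le_n).
Qed.

Definition pdist x y := size x + size y - 2 * lcp x y.

Lemma wdist_pdist x y : wdist x y = pdist (rev x) (rev y).
Proof. by rewrite /wdist /pdist /lcs !size_rev. Qed.

Lemma wdist_diag x : wdist x x = 0.
Proof. rewrite /wdist /lcs -[rev x]cats0 lcp_catl size_rev; lia. Qed.

Lemma pdist_sym x y : pdist x y = pdist y x.
Proof. by rewrite /pdist lcp_sym addnC. Qed.

Lemma pdist_catl z x y : pdist (z ++ x) (z ++ y) = pdist x y.
Proof. rewrite /pdist lcp_catl !size_cat; lia. Qed.

Lemma leq_subsize_pdist x y : size x - size y <= pdist x y.
Proof. have := lcp_leq_size x y; have := lcp_leq_size y x; rewrite /pdist lcp_sym; lia. Qed.

Lemma prefix_seqpow_conj e g h k :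
  size g = size h -> size e + size h <= k * size h ->
  e ++ g = take (size e + size h) (seqpow h k) -> e ++ g = h ++ e.
Proof.
case: k => [|k] Egh.
  rewrite mul0n leqn0 addn_eq0 !size_eq0 => /andP[/eqP-> /eqP Eh].
  by move/eqP: Egh; rewrite Eh size_eq0 => /eqP->.
rewrite mulSn addnC leq_add2l => le_e Epre.
have Ee : e = take (size e) (seqpow h k).
  have := congr1 (take (size e)) Epre.
  by rewrite take_size_cat // seqpowSr take_takel ?leq_addl // takel_cat // size_seqpow.
by rewrite Epre seqpowS takeD take_size_cat // drop_size_cat // -Ee.
Qed.

Section Pumped.
Variables (b1 g a1 b2 h a2 : seq A) (B : nat).
Hypothesis pdist_bounded :
  forall k, pdist (b1 ++ seqpow g k ++ a1) (b2 ++ seqpow h k ++ a2) <= B.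

Lemma pumped_size_eq : size g = size h.
Proof.
pose k := B + size b1 + size a1 + size b2 + size a2 + 1.
have Hxy := pdist_bounded k; have Hyx := Hxy; rewrite pdist_sym in Hyx.
move: (leq_trans (leq_subsize_pdist _ _) Hxy) (leq_trans (leq_subsize_pdist _ _) Hyx).
rewrite !size_cat !size_seqpow.
case: (ltngtP (size g) (size h)) => // lt_gh.
- have : k * (size g).+1 <= k * size h by rewrite leq_mul2l lt_gh orbT.
  rewrite mulnS /k; lia.
- have : k * (size h).+1 <= k * size g by rewrite leq_mul2l lt_gh orbT.
  rewrite mulnS /k; lia.
Qed.

Lemma pumped_conj : size b2 <= size b1 -> 0 < size g ->
  exists2 e, b1 = b2 ++ e & e ++ g = h ++ e.
Proof.
move=> le_b lt0g; have Egh := pumped_size_eq.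
have [k Ek] : exists k, k = B + size b1 + size g by eexists.
have le_kg : k.+1 <= k.+1 * size g by rewrite leq_pmulr.
have := pdist_bounded k.+1; set x := b1 ++ _ ++ a1; set y := b2 ++ _ ++ a2 => Hxy.
pose n := size b1 + size g.
have le_n : n <= lcp x y.
  have := lcp_leq_size x y; have := lcp_leq_size y x; rewrite lcp_sym.
  move: Hxy; rewrite /pdist /x /y !size_cat !size_seqpow -Egh /n; lia.
have := lcp_take le_n.
rewrite {1}/x seqpowS takeD take_size_cat // drop_size_cat // -catA take_size_cat //.
have le_b2n : size b2 <= n by rewrite /n; lia.
rewrite /y -(subnKC le_b2n) takeD take_size_cat //.
rewrite drop_size_cat // takel_cat; last by rewrite size_seqpow -Egh /n; lia.
move=> Ht.
have Eb1 : b1 = b2 ++ drop (size b2) b1.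
  have := congr1 (take (size b2)) Ht; rewrite takel_cat // take_size_cat // => Eb2.
  by rewrite -{1}(cat_take_drop (size b2) b1) Eb2.
exists (drop (size b2) b1) => //; set e := drop _ _ in Eb1 *.
have Se : size e = size b1 - size b2 by rewrite size_drop.
have := congr1 (drop (size b2)) Ht; rewrite {1}Eb1 -catA !drop_size_cat // => {}Ht.
apply: (@prefix_seqpow_conj _ _ _ k.+1 Egh); first by rewrite Se -Egh; lia.
by rewrite Ht Se -Egh /n; congr take; lia.
Qed.

End Pumped.

Lemma pdist_pump_invariant b1 g a1 b2 h a2 B :
  (forall k, pdist (b1 ++ seqpow g k ++ a1) (b2 ++ seqpow h k ++ a2) <= B) ->
  pdist (b1 ++ g ++ a1) (b2 ++ h ++ a2) = pdist (b1 ++ a1) (b2 ++ a2).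
Proof.
wlog le_b : b1 g a1 b2 h a2 / size b2 <= size b1 => [wlog_le | HB].
  case: (leqP (size b2) (size b1)) => [le_b | /ltnW le_b] HB; first exact: wlog_le.
  rewrite pdist_sym [RHS]pdist_sym; apply: wlog_le => // k; rewrite pdist_sym; exact: HB.
have Egh := pumped_size_eq HB.
case: (posnP (size g)) => [g0 | lt0g].
  by move: (g0); rewrite Egh => /size0nil->; rewrite (size0nil g0).
have [e -> Ee] := pumped_conj HB le_b lt0g.
by rewrite -!catA !pdist_catl catA Ee -catA pdist_catl.
Qed.

Lemma wdist_pump_invariant a1 g b1 a2 h b2 B :
  (forall k, wdist (a1 ++ seqpow g k ++ b1) (a2 ++ seqpow h k ++ b2) <= B) ->
  wdist (a1 ++ g ++ b1) (a2 ++ h ++ b2) = wdist (a1 ++ b1) (a2 ++ b2).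
Proof.
move=> HB; rewrite !wdist_pdist !rev_cat -!catA.
apply: (@pdist_pump_invariant _ _ _ _ _ _ B) => k.
by have := HB k; rewrite wdist_pdist !rev_cat !rev_seqpow -!catA.
Qed.

End PrefixDistance.

Fixpoint suffixes (A : Type) (s : seq A) : seq (seq A) :=
  if s is _ :: s' then s :: suffixes s' else [:: [::]].

Lemma size_suffixes (A : Type) (s : seq A) : size (suffixes s) = (size s).+1.
Proof. by elim: s => //= a s ->. Qed.

Lemma suffixes_refl (A : eqType) (s : seq A) : s \in suffixes s.
Proof. by case: s => [|a s]; rewrite /= inE eqxx. Qed.

Lemma mem_suffixes_behead (A : eqType) (s r : seq A) a :
  a :: r \in suffixes s -> r \in suffixes s.
Proof.
elim: s => [|b s IH] //=; rewrite !inE => /orP[/eqP[_ ->] | /IH ->]; last exact: orbT.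
by rewrite suffixes_refl orbT.
Qed.

Lemma mem_allpairs_pair (S T : eqType) (s : seq S) (t : seq T) x y :
  ((x, y) \in [seq (a, b) | a <- s, b <- t]) = (x \in s) && (y \in t).
Proof.
apply/allpairsP/andP => [[[a b] [Ha Hb [-> ->]]] // | [Hx Hy]].
by exists (x, y).
Qed.

Lemma size_flatten_leq (A : Type) (K : nat) (ss : seq (seq A)) :
  all (fun s => size s <= K) ss -> size (flatten ss) <= K * size ss.
Proof. by elim: ss => //= s ss IH /andP[Hs /IH]; rewrite size_cat mulnS; apply: leq_add. Qed.

Section Configurations.
Variables (Sig Om : finType) (T : transducer Sig Om).
Local Notation conf := (tstate T * seq Sig)%type.

(* A move acts on a configuration paired with the remaining input: it either
   takes a transition, whose input becomes pending, or reads one pending letter. *)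
Inductive move : conf * seq Sig -> seq Om -> conf * seq Sig -> Prop :=
| move_trans p x y q r : (p, x, y, q) \in ttrans T -> move ((p, [::]), r) y ((q, x), r)
| move_read q a x r : move ((q, a :: x), a :: r) [::] ((q, x), r).

Definition crun (c : conf) (x : seq Sig) (y : seq Om) (e : conf) :=
  exists2 ys, walk move (c, x) ys (e, [::]) & y = flatten ys.

Lemma crun_nil c : crun c [::] [::] c.
Proof. by exists [::]; first exact: walk_nil. Qed.

Lemma crun_move c x y0 d x' y e :
  move (c, x) y0 (d, x') -> crun d x' y e -> crun c x (y0 ++ y) e.
Proof. by move=> Hm [ys Hw ->]; exists (y0 :: ys); first exact: walk_cons Hm Hw. Qed.

Lemma crun_cat c x y d x' y' e :
  crun c x y d -> crun d x' y' e -> crun c (x ++ x') (y ++ y') e.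
Proof.
move=> [ys Hw ->] [ys' Hw' ->]; exists (ys ++ ys'); last by rewrite flatten_cat.
apply: walk_cat (walk_map (f := fun v => (v.1, v.2 ++ x')) _ Hw) Hw'.
by move=> v a u [p x0 y0 q r Ht | q b z r]; [apply: move_trans | apply: move_read].
Qed.

Lemma crun_trans p x y q z y' e :
  (p, x, y, q) \in ttrans T -> crun (q, x) z y' e -> crun (p, [::]) z (y ++ y') e.
Proof. by move=> Ht; apply: crun_move; apply: move_trans. Qed.

Lemma crun_pending q x : crun (q, x) x [::] (q, [::]).
Proof. by elim: x => [|a x IH]; [apply: crun_nil | apply: (crun_move (move_read q a x x))]. Qed.

Lemma crun_head c a x y e : crun c (a :: x) y e ->
  exists d y1 y2, [/\ crun c [:: a] y1 d, crun d x y2 e & y = y1 ++ y2].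
Proof.
case=> ys + ->; move Ev: (c, a :: x) => v; move Ev': (e, [::]) => v' Hw.
elim: Hw c Ev Ev' => {v ys v'} [v | v y0 u ys v' Hm Hw IH] c Ev Ev'.
  by rewrite -Ev' in Ev; case: Ev.
case: Hm Ev IH Hw => [p x0 y1 q r Ht [-> Er] | q b z r [-> <- <-]] IH Hw.
  have [d [y2 [y3 [H1 H2 Ey]]]] := IH (q, x0) (congr1 _ Er) Ev'.
  by exists d, (y1 ++ y2), y3; split=> //; [apply: crun_trans Ht H1 | rewrite /= Ey catA].
exists (q, z), [::], (flatten ys); split=> //.
  exact: (crun_move (move_read q a z [::]) (crun_nil _)).
by exists ys; rewrite // Ev'.
Qed.

Lemma crun_split c x x' y e : crun c (x ++ x') y e ->
  exists d y1 y2, [/\ crun c x y1 d, crun d x' y2 e & y = y1 ++ y2].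
Proof.
elim: x c y => [|a x IH] c y /=; first by exists c, [::], y; split=> //; apply: crun_nil.
case/crun_head=> d [y1 [y2 [H1 /IH [d' [y3 [y4 [H2 H3 ->]]]] ->]]].
by exists d', (y1 ++ y3), y4; split=> //; [apply: (crun_cat H1 H2) | rewrite catA].
Qed.

Lemma trun_crun p x y q : trun p x y q -> crun (p, [::]) x y (q, [::]).
Proof.
elim=> {p x y q} [p | p x y q xs ys r Ht _ IH]; first exact: crun_nil.
exact: crun_trans Ht (crun_cat (crun_pending q x) IH).
Qed.

Lemma walk_trun v ys q : walk move v ys ((q, [::]), [::]) ->
  exists2 x, v.2 = v.1.2 ++ x & trun v.1.1 x (flatten ys) q.
Proof.
move Ev': ((q, [::]), [::]) => v' Hw.
elim: Hw Ev' => {v ys v'} [v <- | v y0 u ys v' Hm _ IH /IH [x Ex Hx]].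
  by exists [::]; [|apply: trun_nil].
case: Hm Ex Hx => [p x0 y1 q0 r Ht | q0 a z r] /= -> Hx; last by exists x.
by exists (x0 ++ x) => //; apply: trun_cons Ht Hx.
Qed.

Lemma crun_trun p x y q : crun (p, [::]) x y (q, [::]) -> trun p x y q.
Proof. by case=> ys /walk_trun [x' /= ->] Hx ->. Qed.

Definition pending : seq (seq Sig) :=
  [::] :: flatten [seq suffixes tau.1.1.2 | tau <- ttrans T].

Definition configs : seq conf := [seq (p, s) | p <- enum (tstate T), s <- pending].

Lemma mem_configs p s : ((p, s) \in configs) = (s \in pending).
Proof. by rewrite mem_allpairs_pair mem_enum. Qed.

Lemma start_configs p : (p, [::]) \in configs.
Proof. by rewrite mem_configs inE eqxx. Qed.

Lemma move_configs v y u : move v y u -> v.1 \in configs -> u.1 \in configs.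
Proof.
case=> [p x y' q r Ht | q a x r] /=; rewrite !mem_configs !inE.
  move=> _; apply/orP; right; apply/flatten_mapP.
  by exists (p, x, y', q); last exact: suffixes_refl.
case/orP=> [// | /flatten_mapP [tau Ht Hs]]; apply/orP; right; apply/flatten_mapP.
by exists tau => //; apply: mem_suffixes_behead Hs.
Qed.

Lemma crun_configs c x y e : crun c x y e -> c \in configs -> e \in configs.
Proof.
by case=> ys Hw _; apply: (walk_inv (P := fun v => v.1 \in configs) move_configs Hw).
Qed.

Definition max_out : nat := \max_(tau <- ttrans T) size tau.1.2.

Lemma move_out_size v y u : move v y u -> size y <= max_out.
Proof.
by case=> // p x y' q r Ht; apply: (leq_bigmax_seq (F := fun tau => size tau.1.2)) Ht _.
Qed.

Lemma move_suffixes x v y u : move v y u -> v.2 \in suffixes x -> u.2 \in suffixes x.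
Proof. by case=> // q a z r; apply: mem_suffixes_behead. Qed.

Lemma crun_short c x y e : crun c x y e -> c \in configs ->
  exists y', crun c x y' e /\ size y' <= max_out * (size configs * (size x).+1).
Proof.
case=> ys Hw _ Hc.
pose S := [seq (d, s) | d <- configs, s <- suffixes x].
have S_closed v y0 u : move v y0 u -> v \in S -> u \in S.
  case: v u => [d s] [d' s'] Hm; rewrite !mem_allpairs_pair => /andP[Hd Hs].
  by rewrite (move_configs Hm Hd) (move_suffixes Hm Hs).
have [|ys' Hw' lt_ys'] := walk_short S_closed Hw.
  by rewrite mem_allpairs_pair Hc suffixes_refl.
exists (flatten ys'); split; first by exists ys'.
apply: leq_trans (size_flatten_leq (walk_all move_out_size Hw')) _.
by rewrite leq_mul2l -(size_suffixes x) -(size_allpairs pair) ltnW ?orbT.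
Qed.

Definition reach c x e := exists y, crun c x y e.

Lemma reach_cat c x d x' e : reach c x d -> reach d x' e -> reach c (x ++ x') e.
Proof. by move=> [y H] [y' H']; exists (y ++ y'); apply: crun_cat H H'. Qed.

Definition joint_step (d : conf * conf) (a : Sig) (f : conf * conf) :=
  reach d.1 [:: a] f.1 /\ reach d.2 [:: a] f.2.

Lemma walk_joint_reach d w f : walk joint_step d w f -> reach d.1 w f.1 /\ reach d.2 w f.2.
Proof.
elim=> {d w f} [d | d a g w f [H1 H2] _ [K1 K2]]; first by split; exists [::]; apply: crun_nil.
by split; [exact: reach_cat H1 K1 | exact: reach_cat H2 K2].
Qed.

Lemma reach_walk_joint c c' w e e' : reach c w e -> reach c' w e' ->
  exists g g', [/\ walk joint_step (c, c') w (g, g'), reach g [::] e & reach g' [::] e'].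
Proof.
elim: w c c' => [|a w IH] c c' He He'; first by exists c, c'; split=> //; apply: walk_nil.
case: He => [y /crun_head [d [y1 [y2 [H1 H2 _]]]]].
case: He' => [y' /crun_head [d' [y1' [y2' [H1' H2' _]]]]].
have [g [g' [Hw Hg Hg']]] := IH d d' (ex_intro _ y2 H2) (ex_intro _ y2' H2').
by exists g, g'; split=> //; apply: walk_cons Hw; split; [exists y1 | exists y1'].
Qed.

Definition pumpable c w1 w2 w3 e := exists o1 o2 o3,
  forall k, crun c (w1 ++ seqpow w2 k ++ w3) (o1 ++ seqpow o2 k ++ o3) e.

Lemma crun_seqpow f x y k : crun f x y f -> crun f (seqpow x k) (seqpow y k) f.
Proof. by move=> H; elim: k => [|k IH]; [apply: crun_nil | apply: crun_cat H IH]. Qed.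

Lemma reach_pumpable c w1 f w2 w3 e :
  reach c w1 f -> reach f w2 f -> reach f w3 e -> pumpable c w1 w2 w3 e.
Proof.
move=> [o1 H1] [o2 H2] [o3 H3]; exists o1, o2, o3 => k.
exact: crun_cat H1 (crun_cat (crun_seqpow k H2) H3).
Qed.

Lemma joint_pump c c' w e e' : reach c w e -> reach c' w e' ->
  c \in configs -> c' \in configs -> size configs * size configs <= size w ->
  exists w1 w2 w3, [/\ w = w1 ++ w2 ++ w3, 0 < size w2,
    pumpable c w1 w2 w3 e & pumpable c' w1 w2 w3 e'].
Proof.
move=> He He' Hc Hc' le_w.
have [g [g' [Hw Hg Hg']]] := reach_walk_joint He He'.
pose S := [seq (d, d') | d <- configs, d' <- configs].
have S_closed v a u : joint_step v a u -> v \in S -> u \in S.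
  case: v u => [d d'] [f f'] [[o Ho] [o' Ho']]; rewrite !mem_allpairs_pair => /andP[Hd Hd'].
  by rewrite (crun_configs Ho Hd) (crun_configs Ho' Hd').
have [||w1 [w2 [w3 [[f f'] [Ew lt0w2 W1 W2 W3]]]]] := walk_loop S_closed Hw.
- by rewrite mem_allpairs_pair Hc Hc'.
- by rewrite size_allpairs.
have [R1 R1'] := walk_joint_reach W1; have [R2 R2'] := walk_joint_reach W2.
have [R3 R3'] := walk_joint_reach W3.
exists w1, w2, w3; split=> //; rewrite -[w3]cats0.
- exact: reach_pumpable R1 R2 (reach_cat R3 Hg).
- exact: reach_pumpable R1' R2' (reach_cat R3' Hg').
Qed.

End Configurations.

Section FunctionalTransducer.
Variables (Sig Om : finType) (t : seq Sig -> option (seq Om)) (T : transducer Sig Om).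
Hypothesis t_T : forall x y, t x = Some y <-> taccepts T x y.

Lemma t_crun x y : t x = Some y <->
  exists p q : tstate T, [/\ tinit p, tfinal q & crun (p, [::]) x y (q, [::])].
Proof.
rewrite t_T; split=> [[p [q [Hp [Hq H]]]] | [p [q [Hp Hq H]]]]; exists p, q.
  by split=> //; apply: trun_crun.
by do 2 split=> //; apply: crun_trun.
Qed.

Lemma size_t_leq x y :
  t x = Some y -> size y <= max_out T * (size (configs T) * (size x).+1).
Proof.
(* t is a function, so the output of the shortened run is t x itself. *)
move=> Hx; have /t_crun [p [q [Hp Hq /crun_short]]] := Hx.
case/(_ (start_configs p)) => y' [H' le_y'].
have : t x = Some y' by apply/t_crun; exists p, q.
by rewrite Hx => -[->].
Qed.

Section Shorten.
Variables (u v : seq Sig) (B : nat).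
Hypothesis wdist_bounded :
  forall w y1 y2, t (u ++ w) = Some y1 -> t (v ++ w) = Some y2 -> wdist y1 y2 <= B.

Lemma wdist_shorten w y1 y2 : t (u ++ w) = Some y1 -> t (v ++ w) = Some y2 ->
  size (configs T) * size (configs T) <= size w ->
  exists w' y1' y2', [/\ size w' < size w, t (u ++ w') = Some y1',
    t (v ++ w') = Some y2' & wdist y1 y2 = wdist y1' y2'].
Proof.
move=> Hu Hv le_w.
have /t_crun [p [q [Hp Hq /crun_split [d [ya [yb [Ha Hb _]]]]]]] := Hu.
have /t_crun [p' [q' [Hp' Hq' /crun_split [d' [ya' [yb' [Ha' Hb' _]]]]]]] := Hv.
have [||w1 [w2 [w3 [Ew lt0w2 [o1 [o2 [o3 P]]] [o1' [o2' [o3' P']]]]]]] :=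
  joint_pump (ex_intro _ yb Hb) (ex_intro _ yb' Hb') _ _ le_w.
- exact: crun_configs Ha (start_configs p).
- exact: crun_configs Ha' (start_configs p').
have Hk k : t (u ++ w1 ++ seqpow w2 k ++ w3) = Some ((ya ++ o1) ++ seqpow o2 k ++ o3) /\
            t (v ++ w1 ++ seqpow w2 k ++ w3) = Some ((ya' ++ o1') ++ seqpow o2' k ++ o3').
  split; apply/t_crun; [exists p, q | exists p', q']; split=> //; rewrite -catA.
  - exact: crun_cat Ha (P k).
  - exact: crun_cat Ha' (P' k).
(* Functionality identifies y1, y2 with the outputs of the pumped runs at k = 1. *)
have [Hu1 Hv1] := Hk 1; rewrite !seqpow1 -Ew Hu Hv in Hu1 Hv1.
case: Hu1 Hv1 => -> [->]; have [Hu0 Hv0] := Hk 0.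
exists (w1 ++ w3), ((ya ++ o1) ++ o3), ((ya' ++ o1') ++ o3'); split=> //.
  by rewrite Ew !size_cat ltn_add2l -[X in X < _]add0n ltn_add2r.
apply: (@wdist_pump_invariant _ _ _ _ _ _ _ B) => k.
by have [H1 H2] := Hk k; apply: wdist_bounded H1 H2.
Qed.

Lemma wdist_short_witness w y1 y2 : t (u ++ w) = Some y1 -> t (v ++ w) = Some y2 ->
  exists w' y1' y2', [/\ size w' < size (configs T) * size (configs T),
    t (u ++ w') = Some y1', t (v ++ w') = Some y2' & wdist y1 y2 = wdist y1' y2'].
Proof.
move En: (size w) => n; elim/ltn_ind: n w y1 y2 En => n IH w y1 y2 En Hu Hv.
case: (ltnP (size w) (size (configs T) * size (configs T))) => [lt_w | le_w].
  by exists w, y1, y2.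
have [w' [y1' [y2' [lt_w' Hu' Hv' ->]]]] := wdist_shorten Hu Hv le_w.
by apply: (IH (size w')) Hu' Hv' => //; rewrite -En.
Qed.

End Shorten.
End FunctionalTransducer.

Theorem lemma20 (Sig Om : finType) (t : seq Sig -> option (seq Om)) :
  rational_function t -> suffix_closed_dom t ->
  exists c : nat, forall u v w : seq Sig, forall y1 y2 : seq Om,
    t (u ++ w) = Some y1 -> t (v ++ w) = Some y2 -> Rt t u v ->
    wdist y1 y2 <= c * (size u + size v).
Proof.
move=> [T t_T] _; set N := size (configs T); set K := max_out T.
exists (K * N * (2 * (N * N) + 1)) => u v w y1 y2 Hu Hv [_ [s Hs]].
have wdist_bounded w' z1 z2 : t (u ++ w') = Some z1 -> t (v ++ w') = Some z2 ->
    wdist z1 z2 <= \max_(i <- s) i.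
  by move=> H1 H2; apply: (leq_bigmax_seq (F := id)) (Hs _ _ _ H1 H2) _.
have [w' [z1 [z2 [lt_w' Hu' Hv' ->]]]] := wdist_short_witness t_T wdist_bounded Hu Hv.
case: (posnP (size u + size v)) => [uv0 | lt0uv].
  move/eqP: uv0 Hu' Hv'; rewrite addn_eq0 !size_eq0 => /andP[/eqP-> /eqP->] -> [->].
  by rewrite wdist_diag.
apply: leq_trans (leq_subr _ _) _.
apply: leq_trans (leq_add (size_t_leq t_T Hu') (size_t_leq t_T Hv')) _.
rewrite -mulnDr -mulnDr -!mulnA leq_mul2l leq_mul2l !size_cat.
have : N * N <= N * N * (size u + size v) by rewrite leq_pmulr.
by move: lt_w'; rewrite -/N; nia.
Qed.
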